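(* Let $\ell:X^N\to\mathbb R$ be Borel measurable. For $\alpha=(\alpha_\pi)_{\pi\in\mathcal S_N}$ in the simplex $\Delta^{\mathcal S_N}=\{\alpha\in[0,1]^{\mathcal S_N}:\sum_\pi\alpha_\pi=1\}$ let $F_\alpha(\ell)=\sum_{\pi\in\mathcal S_N}\alpha_\pi\,\ell\circ\pi$. Then $$\inf_{\alpha\in\Delta^{\mathcal S_N}}U(F_\alpha(\ell))=\min_{\alpha\in\Delta^{\mathcal S_N}}U(F_\alpha(\ell))=U(\ell_{\mathrm{sym}}),$$ i.e. the infimum is attained at the uniform weights $\alpha_\pi=1/N!$.
   Context: $X$ is a nonempty Polish space, $c$ a proper transportation cost (lower semi-continuous, symmetric, $c(x,x)=0$, weak triangle inequality $c(x,y)\le K(c(x,z)+c(z,y))$, compact sublevel sets $\{x:c(x_0,x)\le r\}$), $\hat P$ a Borel probability measure with $\int c(x_0,\cdot)d\hat P<\infty$, $\rho>0$, $N\in\mathbb N$. $c^N(x,y)=\sum_{i=1}^Nc(x_i,y_i)$ and $\mathbb B^{c^N}_{N\rho}(\hat P^{\otimes N})$ is the set of Borel probability measures $\bar P$ on $X^N$ with finite $c^N$-moment and $W_{c^N}(\bar P,\hat P^{\otimes N})\le N\rho$, where $W$ denotes the optimal transport cost. For Borel $g:X^N\to\mathbb R$, $U(g)=\sup_{\bar P\in\mathbb B^{c^N}_{N\rho}(\hat P^{\otimes N})}\mathbb E_{\bar P}g$ (possibly $+\infty$). $\mathcal S_N$ is the symmetric group, identified with coordinate permutations $\pi(x)=(x_{\pi(1)},\dots,x_{\pi(N)})$;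 $\ell_{\mathrm{sym}}(x)=\frac1{N!}\sum_{\pi\in\mathcal S_N}\ell(\pi(x))$. *)

From HB Require Import structures.
From mathcomp Require Import all_boot all_order all_algebra all_fingroup.
From mathcomp Require Import all_classical all_reals all_analysis.

Set Implicit Arguments.
Unset Strict Implicit.
Unset Printing Implicit Defensive.

Import Order.TTheory GRing.Theory Num.Theory.
Local Open Scope classical_set_scope.
Local Open Scope ring_scope.

Definition polish_space (R : realType) (T : topologicalType) : Prop :=
  (exists D : set T, countable D /\ dense D) /\
  exists dist : T -> T -> R,
    [/\ (forall x y, 0 <= dist x y),
        (forall x y, dist x y = 0 <-> x = y),
        (forall x y, dist x y = dist y x) &
        (forall x y z, dist x z <= dist x y + dist y z)] /\
    [/\
         (forall A : set T, open A <->
           (forall x, A x -> exists2 e : R, 0 < e & [set y | dist x y < e] `<=` A)) &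
        (forall u : nat -> T,
           (forall e : R, 0 < e -> exists M : nat, forall m n : nat,
               (M <= m)%N -> (M <= n)%N -> dist (u m) (u n) < e) ->
           exists x : T, forall e : R, 0 < e -> exists M : nat,
               forall n : nat, (M <= n)%N -> dist (u n) x < e)].

Definition Borel (T : ptopologicalType) := g_sigma_algebraType (@open T).

Definition proper_cost (R : realType) (T : topologicalType) (c : T -> T -> R) : Prop :=
  (forall x y, 0 <= c x y) /\
  [/\ @lower_semicontinuous (T * T)%type R (fun z => (c z.1 z.2)%:E),
      (forall x y, c x y = c y x),
      (forall x, c x x = 0),
      (exists K : R, forall x y z, c x y <= K * (c x z + c z y)) &
      (forall (x0 : T) (r : R), compact [set x | c x0 x <= r])].

Definition costN (R : realType) (T : Type) (N : nat) (c : T -> T -> R)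
  (x y : N.-tuple T) : R := \sum_(i < N) c (tnth x i) (tnth y i).

Definition ctuple (T : Type) (N : nat) (x0 : T) : N.-tuple T := [tuple x0 | i < N].

Local Open Scope ereal_scope.

Definition finite_moment d (S : measurableType d) (R : realType)
  (cc : S -> S -> R) (P : probability S R) : Prop :=
  exists x0 : S, \int[P]_y (cc x0 y)%:E < +oo.

Definition coupling d (S : measurableType d) (R : realType)
  (P Q : probability S R) (g : probability (S * S)%type R) : Prop :=
  forall A : set S, measurable A ->
    g (A `*` setT) = P A /\ g (setT `*` A) = Q A.

Definition OT_cost d (S : measurableType d) (R : realType)
  (cc : S -> S -> R) (P Q : probability S R) : \bar R :=
  ereal_inf [set \int[g]_z (cc z.1 z.2)%:E | g in coupling P Q].

(* expectation of a Borel function g : S -> R, defined as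
   E g = E g^+ - E g^-  with the convention  +oo - +oo = +oo *)
Definition expect_up d (S : measurableType d) (R : realType)
  (P : probability S R) (g : S -> R) : \bar R :=
  let p := \int[P]_x (Num.max (g x) 0%R)%:E in
  let n := \int[P]_x (Num.max (- g x)%R 0%R)%:E in
  if p == +oo then +oo else p - n.

Definition wball (R : realType) (T : ptopologicalType) (N : nat)
  (c : T -> T -> R) (rho : R) (PhatN : probability (N.-tuple (Borel T)) R)
  (Pbar : probability (N.-tuple (Borel T)) R) : Prop :=
  finite_moment (@costN R (Borel T) N c) Pbar /\
  OT_cost (@costN R (Borel T) N c) Pbar PhatN <= (N%:R * rho)%:E.

Definition Uwc (R : realType) (T : ptopologicalType) (N : nat)
  (c : T -> T -> R) (rho : R) (PhatN : probability (N.-tuple (Borel T)) R)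
  (g : N.-tuple (Borel T) -> R) : \bar R :=
  ereal_sup [set expect_up Pbar g | Pbar in wball c rho PhatN].

Local Close Scope ereal_scope.

Definition is_product_measure (R : realType) (T : ptopologicalType) (N : nat)
  (Phat : probability (Borel T) R) (PhatN : probability (N.-tuple (Borel T)) R) : Prop :=
  forall A : 'I_N -> set (Borel T), (forall i, measurable (A i)) ->
    PhatN [set x | forall i, A i (tnth x i)] = (\prod_(i < N) Phat (A i))%E.

Definition perm_tuple (T : Type) (N : nat) (s : 'S_N) (x : N.-tuple T) : N.-tuple T :=
  [tuple tnth x (s i) | i < N].

Definition simplex (R : realType) (N : nat) : set ('S_N -> R) :=
  [set a | (forall s, 0 <= a s <= 1) /\ \sum_(s : 'S_N) a s = 1].

Definition Falpha (R : realType) (T : Type) (N : nat) (a : 'S_N -> R)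
  (l : N.-tuple T -> R) : N.-tuple T -> R :=
  fun x => \sum_(s : 'S_N) a s * l (perm_tuple s x).

Definition lsym (R : realType) (T : Type) (N : nat) (l : N.-tuple T -> R) :
  N.-tuple T -> R :=
  fun x => (N`!%:R)^-1 * \sum_(s : 'S_N) l (perm_tuple s x).

Definition unif_weights (R : realType) (N : nat) : 'S_N -> R :=
  fun _ => (N`!%:R)^-1.

From HB Require Import structures.
From mathcomp Require Import all_boot all_order all_algebra all_fingroup.
From mathcomp Require Import all_classical all_reals all_analysis.
From mathcomp Require Import measurable_realfun lra.

(* Coordinate permutations preserve both the product measure [Phat^N] and the
   cost [c^N], so pushing a measure of the Wasserstein ball forward along a
   permutation stays in the ball; hence [E_P (g \o pi) <= U g] for every [P] in
   the ball.  For [alpha] in the simplex, [l_sym] is the uniform average over [pi]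
   of [F_alpha(l) \o pi], and the expectation of a convex combination is at most
   any common bound on the expectations, so [E_P l_sym <= U (F_alpha l)].  As
   [F_alpha l = l_sym] for uniform weights, the infimum is attained there. *)

Set Implicit Arguments.
Unset Strict Implicit.
Unset Printing Implicit Defensive.
Import Order.TTheory GRing.Theory Num.Theory HBNNSimple.
Local Open Scope classical_set_scope.
Local Open Scope ring_scope.

Section perm_tuple.
Variables (T : Type) (N : nat).

Lemma perm_tupleE (s : 'S_N) (x : N.-tuple T) i :
  tnth (perm_tuple s x) i = tnth x (s i).
Proof. by rewrite tnth_mktuple. Qed.

Lemma perm_tupleM (s t : 'S_N) (x : N.-tuple T) :
  perm_tuple s (perm_tuple t x) = perm_tuple (s * t) x.
Proof. by apply: eq_from_tnth => i; rewrite !perm_tupleE permM. Qed.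

Lemma perm_tuple1 (x : N.-tuple T) : perm_tuple 1 x = x.
Proof. by apply: eq_from_tnth => i; rewrite perm_tupleE perm1. Qed.

Lemma perm_tupleK (s : 'S_N) : cancel (@perm_tuple T N s) (perm_tuple s^-1).
Proof. by move=> x; rewrite perm_tupleM mulVg perm_tuple1. Qed.

Lemma perm_tupleKV (s : 'S_N) : cancel (@perm_tuple T N s^-1) (perm_tuple s).
Proof. by move=> x; rewrite perm_tupleM mulgV perm_tuple1. Qed.

Lemma costN_perm_tuple (R : realType) (c : T -> T -> R) (s : 'S_N) x y :
  costN c (perm_tuple s x) (perm_tuple s y) = costN c x y.
Proof.
rewrite /costN (reindex_inj (@perm_inj _ s^-1)) /=.
by apply: eq_bigr => i _; rewrite !perm_tupleE permKV.
Qed.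

End perm_tuple.

Definition perm_pair (T : Type) (N : nat) (s : 'S_N) (z : N.-tuple T * N.-tuple T) :=
  (perm_tuple s z.1, perm_tuple s z.2).

Lemma perm_pairK (T : Type) (N : nat) (s : 'S_N) :
  cancel (@perm_pair T N s) (perm_pair s^-1).
Proof. by move=> [x y]; rewrite /perm_pair /= !perm_tupleK. Qed.

Lemma perm_pairKV (T : Type) (N : nat) (s : 'S_N) :
  cancel (@perm_pair T N s^-1) (perm_pair s).
Proof. by move=> [x y]; rewrite /perm_pair /= !perm_tupleKV. Qed.

Section measurable_perm.
Context d (T : measurableType d) (N : nat) (s : 'S_N).

Lemma measurable_perm_tuple : measurable_fun [set: N.-tuple T] (perm_tuple s).
Proof.
apply/measurable_fun_tnthP => i.
rewrite (_ : _ \o _ = (@tnth N T)^~ (s i)); first exact: measurable_tnth.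
by apply: funext => x /=; rewrite perm_tupleE.
Qed.

HB.instance Definition _ := isMeasurableFun.Build _ _ _ _ (perm_tuple s)
  measurable_perm_tuple.

Lemma measurable_perm_pair :
  measurable_fun [set: N.-tuple T * N.-tuple T] (perm_pair s).
Proof.
by apply/measurable_fun_pairP; split;
  exact: measurableT_comp measurable_perm_tuple _.
Qed.

HB.instance Definition _ := isMeasurableFun.Build _ _ _ _ (perm_pair s)
  measurable_perm_pair.

End measurable_perm.

Section product_measure.
Local Open Scope ereal_scope.
Context d (X : measurableType d) (R : realType) (N : nat).
Variables (P : probability X R) (PN : probability (N.-tuple X) R).
Hypothesis PN_prod : forall A : 'I_N -> set X, (forall i, measurable (A i)) ->
  PN [set x | forall i, A i (tnth x i)] = \prod_(i < N) P (A i).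

Let box (A : 'I_N -> set X) := [set x : N.-tuple X | forall i, A i (tnth x i)].
Let boxes := [set box A | A in [set A | forall i, measurable (A i)]].

Let measurable_box A : (forall i, measurable (A i)) -> measurable (box A).
Proof.
move=> mA; have -> : box A = \bigcap_(i in [set: 'I_N]) ((@tnth N X)^~ i @^-1` A i).
  by apply/seteqP; split => x /= Ax i; [move=> _|]; exact: Ax.
apply: fin_bigcap_measurable; first exact: finite_finset.
by move=> i _; rewrite -[X in measurable X]setTI; exact: measurable_tnth.
Qed.

Let measurable_boxes : @measurable _ (N.-tuple X) = <<s boxes >>.
Proof.
apply/seteqP; split; last first.
  apply: smallest_sub; first exact: sigma_algebra_measurable.
  by move=> _ [A mA <-]; exact: measurable_box.
apply: smallest_sub; first exact: smallest_sigma_algebra.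
move=> A; rewrite -bigcup_seq => -[i _ [B mB <-]]; apply: sub_gen_smallest.
exists (fun j => if j == i then B else setT); first by move=> j; case: ifP.
apply/seteqP; split => x /=.
  by move=> Bx; split=> //; have := Bx i; rewrite eqxx.
by move=> [_ Bx] j; case: ifP => // /eqP ->.
Qed.

Let setI_closed_boxes : setI_closed boxes.
Proof.
move=> _ _ [A mA <-] [B mB <-]; exists (fun i => A i `&` B i).
  by move=> i; exact: measurableI.
apply/seteqP; split => x /=; first by move=> ABx; split=> i; case: (ABx i).
by move=> [Ax Bx] i; split; [exact: Ax|exact: Bx].
Qed.

Lemma product_distribution_perm (s : 'S_N) B : measurable B ->
  distribution PN (perm_tuple s) B = PN B.
Proof.
apply: (measure_unique boxes (fun=> setT) measurable_boxes setI_closed_boxes).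
- by move=> _; exists (fun=> setT) => //; apply/seteqP; split.
- by apply/seteqP; split => x // _; exists 0%N.
- move=> _ [A mA <-]; change (PN (perm_tuple s @^-1` box A) = PN (box A)).
  have -> : perm_tuple s @^-1` box A = box (fun j => A ((s^-1)%g j)).
    apply/seteqP; split => x /= Ax i; rewrite ?perm_tupleE.
      by have := Ax ((s^-1)%g i); rewrite perm_tupleE permKV.
    by have := Ax (s i); rewrite permK.
  rewrite !PN_prod// (reindex_inj (@perm_inj _ s)) /=.
  by apply: eq_bigr => i _; rewrite permK.
- move=> _; change (PN (perm_tuple s @^-1` setT) < +oo).
  by rewrite preimage_setT probability_setT ltry.
Qed.

End product_measure.

Section comp_nnsfun.
Context d (X : measurableType d) (R : realType).
Variables (h : {nnsfun X >-> R}) (phi : {mfun X >-> X}).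

Let hphi := h \o phi.

Let measurable_hphi : measurable_fun [set: X] hphi.
Proof. exact: measurableT_comp. Qed.

HB.instance Definition _ := isMeasurableFun.Build _ _ _ _ hphi measurable_hphi.

Let finite_range_hphi : finite_set (range hphi).
Proof.
apply: (@sub_finite_set _ _ (range h)); last exact: fimfunP.
by move=> _ [x _ <-]; exists (phi x).
Qed.

HB.instance Definition _ := @FiniteImage.Build X R hphi finite_range_hphi.

Let hphi_ge0 x : (0 <= hphi x)%R. Proof. exact: fun_ge0. Qed.

HB.instance Definition _ := @isNonNegFun.Build X R hphi hphi_ge0.

Definition comp_nnsfun : {nnsfun X >-> R} := hphi.

End comp_nnsfun.

Section distribution_bij.
Local Open Scope ereal_scope.
Context d (X : measurableType d) (R : realType) (mu : probability X R).
Variables (phi psi : {mfun X >-> X}).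
Hypotheses (phiK : cancel phi psi) (psiK : cancel psi phi).

(* No measurability of [f] is needed: precomposition with [phi] and [psi]
   exchanges the simple functions below [f] and below [f \o phi]. *)
Lemma ge0_integral_distribution_bij (f : X -> \bar R) : (forall x, 0 <= f x) ->
  \int[distribution mu phi]_x f x = \int[mu]_x f (phi x).
Proof.
move=> f0; rewrite !ge0_integralTE//; apply/eqP; rewrite eq_le; apply/andP; split.
  apply: ge_ereal_sup => _ [h /= hf <-]; apply: ereal_sup_ubound.
  by exists (comp_nnsfun h phi) => // x; exact: hf.
apply: ge_ereal_sup => _ [h /= hf <-]; apply: ereal_sup_ubound.
exists (comp_nnsfun h psi) => [x|] /=; first by rewrite -{2}(psiK x); exact: hf.
rewrite /distribution /pushforward /sintegral /=.
apply: eq_fsbigr => r _; congr (_ * mu _).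
by apply: funext => x /=; rewrite /preimage /= phiK.
Qed.

Lemma expect_up_distribution_bij (g : X -> R) :
  expect_up (distribution mu phi) g = expect_up mu (g \o phi).
Proof.
by rewrite /expect_up !ge0_integral_distribution_bij// => x;
  rewrite lee_fin (funrpos_ge0, funrneg_ge0).
Qed.

End distribution_bij.

Section wasserstein_ball_perm.
Local Open Scope ereal_scope.
Context d (X : measurableType d) (R : realType) (N : nat).
Variables (cc : N.-tuple X -> N.-tuple X -> R) (PhatN : probability (N.-tuple X) R).
Hypothesis cc_ge0 : forall x y, (0 <= cc x y)%R.
Hypothesis cc_perm :
  forall (s : 'S_N) x y, cc (perm_tuple s x) (perm_tuple s y) = cc x y.
Hypothesis PhatN_perm : forall (s : 'S_N) B, measurable B ->
  distribution PhatN (perm_tuple s) B = PhatN B.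

Lemma finite_moment_perm (P : probability (N.-tuple X) R) (s : 'S_N) :
  finite_moment cc P -> finite_moment cc (distribution P (perm_tuple s)).
Proof.
move=> [x0 hx0]; exists (perm_tuple s x0).
rewrite (ge0_integral_distribution_bij _ (perm_tupleK s) (perm_tupleKV s)); last first.
  by move=> y; rewrite lee_fin.
by under eq_integral do rewrite cc_perm.
Qed.

Lemma OT_cost_perm (P : probability (N.-tuple X) R) (s : 'S_N) :
  OT_cost cc (distribution P (perm_tuple s)) PhatN <= OT_cost cc P PhatN.
Proof.
apply: ereal_inf_le_tmp => _ [g gc <-]; exists (distribution g (perm_pair s)).
  move=> A mA.
  have mA' : measurable (perm_tuple s @^-1` A).
    by rewrite -[X in measurable X]setTI; exact: measurable_perm_tuple.
  have [gA1 gA2] := gc _ mA'; split.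
    change (g (perm_pair s @^-1` (A `*` setT)) = P (perm_tuple s @^-1` A)).
    by rewrite -gA1; congr (g _); apply/seteqP; split => -[x y].
  change (g (perm_pair s @^-1` (setT `*` A)) = PhatN A).
  rewrite -(PhatN_perm s mA) -[RHS]gA2.
  by congr (g _); apply/seteqP; split => -[x y].
rewrite (ge0_integral_distribution_bij _ (perm_pairK s) (perm_pairKV s)); last first.
  by move=> z; rewrite lee_fin.
by apply: eq_integral => -[x y] _; rewrite /= cc_perm.
Qed.

End wasserstein_ball_perm.

Lemma wball_perm (R : realType) (T : ptopologicalType) (N : nat) (c : T -> T -> R)
    (rho : R) (Phat : probability (Borel T) R)
    (PhatN : probability (N.-tuple (Borel T)) R) (Pbar : probability _ R) (s : 'S_N) :
  (forall x y, (0 <= c x y)%R) -> is_product_measure Phat PhatN ->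
  wball c rho PhatN Pbar -> wball c rho PhatN (distribution Pbar (perm_tuple s)).
Proof.
move=> c_ge0 PhatN_prod [Pbar_moment Pbar_cost].
have cN_ge0 x y : (0 <= costN c x y)%R by apply: sumr_ge0 => i _; exact: c_ge0.
have PhatN_perm := product_distribution_perm PhatN_prod.
split; first by apply: finite_moment_perm => // *; exact: costN_perm_tuple.
apply: le_trans Pbar_cost; apply: OT_cost_perm => // *; exact: costN_perm_tuple.
Qed.

Section convex_combination.
Local Open Scope ereal_scope.
Context d (Y : measurableType d) (R : realType).

Lemma ge0_integral_wsum (mu : {measure set Y -> \bar R}) (I : finType)
    (a : I -> R) (v : I -> Y -> R) :
  (forall i, (0 <= a i)%R) -> (forall i, measurable_fun setT (v i)) ->
  (forall i x, (0 <= v i x)%R) ->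
  \int[mu]_x (\sum_i a i * v i x)%:E = \sum_i (a i)%:E * \int[mu]_x (v i x)%:E.
Proof.
move=> a0 mv v0; under eq_integral do rewrite -sumEFin.
rewrite ge0_integral_sum//; last 2 first.
- by move=> i; apply/measurable_EFinP; exact: measurable_funM.
- by move=> i x _; rewrite lee_fin mulr_ge0.
apply: eq_bigr => i _; under eq_integral do rewrite EFinM.
rewrite ge0_integralZl ?lee_fin//; first exact/measurable_EFinP.
by move=> x _; rewrite lee_fin.
Qed.

Variables (P : probability Y R) (I : finType) (a : I -> R) (f : I -> Y -> R).
Hypotheses (a0 : forall i, (0 <= a i)%R) (a1 : (\sum_i a i = 1)%R)
  (mf : forall i, measurable_fun setT (f i)).

Let g x := (\sum_i a i * f i x)%R.
Let pos (h : Y -> R) := \int[P]_x (h^\+ x)%:E.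
Let neg (h : Y -> R) := \int[P]_x (h^\- x)%:E.

Let expect_upE h : expect_up P h = if pos h == +oo then +oo else pos h - neg h.
Proof. by []. Qed.

Let mg : measurable_fun setT g.
Proof. by apply: measurable_sum => i; exact: measurable_funM. Qed.

Let pos_ge0 h : 0 <= pos h.
Proof. by apply: integral_ge0 => x _; rewrite lee_fin funrpos_ge0. Qed.

Let neg_ge0 h : 0 <= neg h.
Proof. by apply: integral_ge0 => x _; rewrite lee_fin funrneg_ge0. Qed.

Lemma integral_funrpos_convex_le : pos g <= \sum_i (a i)%:E * pos (f i).
Proof.
rewrite -ge0_integral_wsum//; last by move=> i; exact: measurable_funrpos.
apply: ge0_le_integral => //.
- by move=> x _; rewrite lee_fin funrpos_ge0.
- exact/measurable_EFinP/measurable_funrpos.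
- apply/measurable_EFinP; apply: measurable_sum => i.
  exact/measurable_funM/measurable_funrpos.
move=> x _; rewrite lee_fin /funrpos ge_max; apply/andP; split.
  by apply: ler_sum => i _; rewrite ler_wpM2l// le_max lexx.
by apply: sumr_ge0 => i _; rewrite mulr_ge0// le_max lexx orbT.
Qed.

Lemma integral_funrposneg_convex :
  pos g + \sum_i (a i)%:E * neg (f i) = neg g + \sum_i (a i)%:E * pos (f i).
Proof.
have mwsum (v : I -> Y -> R) : (forall i, measurable_fun setT (v i)) ->
    measurable_fun setT (fun x => (\sum_i a i * v i x)%:E).
  by move=> mv; apply/measurable_EFinP/measurable_sum => i; exact: measurable_funM.
rewrite /pos /neg -!ge0_integral_wsum//; first last.
- by move=> i; exact: measurable_funrneg.
- by move=> i; exact: measurable_funrpos.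
rewrite -!ge0_integralD//; last 8 first.
- by move=> x _; rewrite lee_fin funrneg_ge0.
- exact/measurable_EFinP/measurable_funrneg.
- by move=> x _; rewrite lee_fin sumr_ge0// => i _; rewrite mulr_ge0// funrpos_ge0.
- by apply: mwsum => i; exact: measurable_funrpos.
- by move=> x _; rewrite lee_fin funrpos_ge0.
- exact/measurable_EFinP/measurable_funrpos.
- by move=> x _; rewrite lee_fin sumr_ge0// => i _; rewrite mulr_ge0// funrneg_ge0.
- by apply: mwsum => i; exact: measurable_funrneg.
apply: eq_integral => x _; rewrite -!EFinD; congr EFin.
have posE (h : Y -> R) : (h^\+ x = h^\- x + h x)%R.
  by rewrite -{3}(funrposBneg h) !fctE; lra.
have sum_posE : (\sum_i a i * (f i)^\+ x = \sum_i a i * (f i)^\- x + g x)%R.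
  by rewrite /g -big_split; apply: eq_bigr => i _; rewrite posE mulrDr.
by rewrite sum_posE posE; lra.
Qed.

Let expect_up_fin h : pos h \is a fin_num -> expect_up P h = pos h - neg h.
Proof. by rewrite expect_upE => /fin_numP[_ /negbTE ->]. Qed.

Lemma expect_up_convex_le_EFin (r : R) :
  (forall i, expect_up P (f i) <= r%:E) -> expect_up P g <= r%:E.
Proof.
move=> hf.
have pfin i : pos (f i) \is a fin_num.
  rewrite ge0_fin_numE// ltey; apply: contraTN (hf i) => /eqP pinf.
  by rewrite expect_upE pinf eqxx leye_eq.
pose p i := fine (pos (f i)).
have pE i : pos (f i) = (p i)%:E by rewrite fineK.
have sum_posE : \sum_i (a i)%:E * pos (f i) = (\sum_i a i * p i)%:E.
  by rewrite -sumEFin; apply: eq_bigr => i _; rewrite pE EFinM.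
have neg_lb i : (p i - r)%:E <= neg (f i).
  have := neg_ge0 (f i); move: (hf i); rewrite expect_up_fin// pE.
  case: (neg (f i)) => [m|_ _|//]; last exact: leey.
  by rewrite -EFinB !lee_fin; lra.
have sum_neg_lb : (\sum_i a i * p i - r)%:E <= \sum_i (a i)%:E * neg (f i).
  have -> : (\sum_i a i * p i - r = \sum_i a i * (p i - r))%R.
    rewrite -[r in LHS]mul1r -a1 mulr_suml -sumrB.
    by apply: eq_bigr => i _; rewrite mulrBr.
  by rewrite -sumEFin; apply: lee_sum => i _; rewrite EFinM lee_wpmul2l ?lee_fin.
have gfin : pos g \is a fin_num.
  rewrite ge0_fin_numE// (le_lt_trans integral_funrpos_convex_le)//.
  by rewrite sum_posE ltry.
have := integral_funrposneg_convex; rewrite expect_up_fin// sum_posE.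
rewrite -(fineK gfin); move: sum_neg_lb; set S := \sum_i _.
case: (neg g) (neg_ge0 g) => [m _| _ _|//]; last by rewrite addeNy leNye.
case: S => [s| |] /=; last 2 first.
- by move=> _; rewrite addey// -EFinD.
- by rewrite leeNy_eq.
by rewrite -!EFinD !lee_fin => hs [hk]; lra.
Qed.

Lemma expect_up_convex_le (M : \bar R) :
  (forall i, expect_up P (f i) <= M) -> expect_up P g <= M.
Proof.
case: M => [r| |] hf; [exact: expect_up_convex_le_EFin|exact: leey|].
rewrite (@eq_ninfty _ (expect_up P g))// => r.
by apply: expect_up_convex_le_EFin => i; rewrite (le_trans (hf i)) ?leNye.
Qed.

End convex_combination.

Section symmetrization.
Variables (R : realType) (T : Type) (N : nat) (l : N.-tuple T -> R).

Lemma simplex_unif_weights : simplex (@unif_weights R N).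
Proof.
have fact_neq0 : N`!%:R != 0 :> R by rewrite pnatr_eq0 -lt0n fact_gt0.
split=> [s|].
  by rewrite invr_ge0 ler0n invf_le1 ?ler1n ?fact_gt0 ?ltr0n ?fact_gt0.
by rewrite /unif_weights sumr_const card_Sn -[_ *+ N`!]mulr_natr mulVf.
Qed.

Lemma Falpha_unif_weights : Falpha (@unif_weights R N) l = lsym l.
Proof. by apply: funext => x; rewrite /Falpha /lsym mulr_sumr. Qed.

Lemma lsym_average_Falpha (a : 'S_N -> R) x : \sum_s a s = 1 ->
  lsym l x = \sum_s @unif_weights R N s * Falpha a l (perm_tuple s x).
Proof.
move=> a1; rewrite /lsym /unif_weights -mulr_sumr; congr (_ * _).
rewrite -[LHS]mul1r -a1 mulr_suml /Falpha exchange_big /=.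
apply: eq_bigr => t _; rewrite mulr_sumr (reindex_inj (mulgI t)) /=.
by apply: eq_bigr => s _; rewrite perm_tupleM.
Qed.

End symmetrization.

Lemma measurable_Falpha d (T : measurableType d) (R : realType) (N : nat)
    (a : 'S_N -> R) (l : N.-tuple T -> R) :
  measurable_fun setT l -> measurable_fun setT (Falpha a l).
Proof.
move=> ml; apply: measurable_sum => s; apply: measurable_funM => //.
exact: measurableT_comp ml (measurable_perm_tuple s).
Qed.

Section worst_case_expectation.
Variables (R : realType) (T : ptopologicalType) (c : T -> T -> R) (rho : R).
Variables (N : nat) (Phat : probability (Borel T) R).
Variables (PhatN : probability (N.-tuple (Borel T)) R).
Hypotheses (c_ge0 : forall x y, 0 <= c x y).
Hypotheses (PhatN_prod : is_product_measure Phat PhatN).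

Lemma expect_up_perm_le_Uwc (Pbar : probability _ R) (g : N.-tuple (Borel T) -> R)
    (s : 'S_N) :
  wball c rho PhatN Pbar ->
  (expect_up Pbar (g \o perm_tuple s) <= Uwc c rho PhatN g)%E.
Proof.
move=> Pbar_ball.
rewrite -(expect_up_distribution_bij Pbar (perm_tupleK s) (perm_tupleKV s)).
apply: ereal_sup_ubound; exists (distribution Pbar (perm_tuple s)) => //.
exact: wball_perm c_ge0 PhatN_prod Pbar_ball.
Qed.

Lemma Uwc_lsym_le_Falpha (l : N.-tuple (Borel T) -> R) (a : 'S_N -> R) :
  measurable_fun setT l -> simplex a ->
  (Uwc c rho PhatN (lsym l) <= Uwc c rho PhatN (Falpha a l))%E.
Proof.
move=> ml [_ a1]; apply: ge_ereal_sup => _ [Pbar Pbar_ball <-].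
have -> : lsym l = fun x => \sum_s @unif_weights R N s * Falpha a l (perm_tuple s x).
  by apply: funext => x; exact: lsym_average_Falpha.
have [unif_ge0 unif1] := @simplex_unif_weights R N.
apply: (expect_up_convex_le (f := fun s => Falpha a l \o perm_tuple s)) => // s.
- by have /andP[] := unif_ge0 s.
- exact: measurableT_comp (measurable_Falpha _ ml) (measurable_perm_tuple s).
- exact: expect_up_perm_le_Uwc.
Qed.

End worst_case_expectation.

Theorem mainTheorem6 (R : realType) (T : ptopologicalType) (c : T -> T -> R)
  (Phat : probability (Borel T) R) (rho : R) (N : nat)
  (PhatN : probability (N.-tuple (Borel T)) R)
  (l : N.-tuple (Borel T) -> R) :
  polish_space R T ->
  proper_cost c ->
  (exists x0 : Borel T, (\int[Phat]_y (c x0 y)%:E < +oo)%E) ->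
  0 < rho ->
  is_product_measure Phat PhatN ->
  measurable_fun setT l ->
  let S := [set Uwc c rho PhatN (Falpha a l) | a in @simplex R N] in
  [/\ ereal_inf S = Uwc c rho PhatN (lsym l),
      S (ereal_inf S) &
      @simplex R N (@unif_weights R N) /\
      Uwc c rho PhatN (Falpha (@unif_weights R N) l) = ereal_inf S].
Proof.
move=> _ [c_ge0 _] _ _ PhatN_prod ml S.
have lsym_in_S : S (Uwc c rho PhatN (lsym l)).
  exists (@unif_weights R N); first exact: simplex_unif_weights.
  by rewrite Falpha_unif_weights.
have infE : ereal_inf S = Uwc c rho PhatN (lsym l).
  apply/eqP; rewrite eq_le ereal_inf_lbound//=.
  apply: le_ereal_inf_tmp => _ [a a_simplex <-] /=.
  exact (Uwc_lsym_le_Falpha rho c_ge0 PhatN_prod ml a_simplex).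
rewrite infE Falpha_unif_weights; split=> //; split=> //.
exact: simplex_unif_weights.
Qed.
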